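(* Let the setting below hold, let $\sigma,\tau>0$ satisfy $\sigma\tau\|A\|^2+\tau L\le 1$, and let $(x^{(k)},z^{(k)})$ be generated either by the Bregman primal Condat--V\~u algorithm \[x^{(k+1)}=\mathrm{prox}^{\phi_{\mathrm p}}_{\tau f}\big(x^{(k)},\tau A^Tz^{(k)}+\tau\nabla h(x^{(k)})\big),\quad z^{(k+1)}=\mathrm{prox}^{\phi_{\mathrm d}}_{\sigma g^*}\big(z^{(k)},-\sigma A(2x^{(k+1)}-x^{(k)})\big),\] in which case set $d=d_-$, $\tilde d=d_{\mathrm{pcv}}$; or by the Bregman dual Condat--V\~u algorithm \[z^{(k+1)}=\mathrm{prox}^{\phi_{\mathrm d}}_{\sigma g^*}\big(z^{(k)},-\sigma Ax^{(k)}\big),\quad x^{(k+1)}=\mathrm{prox}^{\phi_{\mathrm p}}_{\tau f}\big(x^{(k)},\tau A^T(2z^{(k+1)}-z^{(k)})+\tau\nabla h(x^{(k)})\big),\] in which case set $d=d_+$, $\tilde d=d_{\mathrm{dcv}}$; in both cases starting from $x^{(0)}\in\operatorname{int}(\operatorname{dom}\phi_{\mathrm p})\cap\operatorname{dom} h$, $z^{(0)}\in\operatorname{int}(\operatorname{dom}\phi_{\mathrm d})$. Then for every $k\ge0$, all $x\in\operatorname{dom} f\cap\operatorname{dom}\phi_{\mathrm p}$ and all $z\in\operatorname{dom} g^*\cap\operatorname{dom}\phi_{\mathrm d}$, \[\mathcal L(x^{(k+1)},z)-\mathcal L(x,z^{(k+1)})\le d(x,z;x^{(k)},z^{(k)})-d(x,z;x^{(k+1)},z^{(k+1)})-\tilde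 d(x^{(k+1)},z^{(k+1)};x^{(k)},z^{(k)}).\]
   Context: Setting: $f:\mathbb R^n\to\mathbb R\cup\{+\infty\}$, $g:\mathbb R^m\to\mathbb R\cup\{+\infty\}$, $h$ are closed convex functions, $h$ differentiable on its open convex domain, $f+h$ and $g$ proper, $A\in\mathbb R^{m\times n}$; $g^*$ is the conjugate of $g$. Lagrangian: $\mathcal L(x,z)=f(x)+h(x)+\langle z,Ax\rangle-g^*(z)$ (with value $+\infty$ if $x\notin\operatorname{dom}(f+h)$ and $-\infty$ if $x\in\operatorname{dom}(f+h)$, $z\notin\operatorname{dom}g^*$). A Bregman kernel $\phi$ is convex with $\operatorname{int}(\operatorname{dom}\phi)\neq\emptyset$, continuous on $\operatorname{dom}\phi$, continuously differentiable on $\operatorname{int}(\operatorname{dom}\phi)$; its distance is $d(x,y)=\phi(x)-\phi(y)-\langle\nabla\phi(y),x-y\rangle$ on $\operatorname{dom}\phi\times\operatorname{int}(\operatorname{dom}\phi)$, and $\mathrm{prox}^\phi_F(y,a)=\operatorname{argmin}_x\big(F(x)+\langle a,x\rangle+d(x,y)\big)$, assumed for every $a$ and $y\in\operatorname{int}(\operatorname{dom}\phi)$ to be a unique point of $\operatorname{int}(\operatorname{dom}\phi)$. Kernels $\phi_{\mathrm p}$ on $\mathbb R^n$ and $\phi_{\mathrm d}$ on $\mathbb R^m$ have distances $d_{\mathrm p},d_{\mathrm d}$ with $d_{\mathrm p}(x,x')\ge\frac12\|x-x'\|_{\mathrm p}^2$, $d_{\mathrm d}(z,z')\ge\frac12\|z-z'\|_{\mathrm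 d}^2$ for norms $\|\cdot\|_{\mathrm p},\|\cdot\|_{\mathrm d}$. Also $\operatorname{dom}\phi_{\mathrm p}\subseteq\operatorname{dom}h$ and $h(x)-h(x')-\langle\nabla h(x'),x-x'\rangle\le L\,d_{\mathrm p}(x,x')$ for all $(x,x')\in\operatorname{dom}d_{\mathrm p}$, for some $L>0$. $\|A\|=\sup_{u\ne0,v\ne0}\langle v,Au\rangle/(\|v\|_{\mathrm d}\|u\|_{\mathrm p})$. The optimality conditions $0\in\partial f(x)+\nabla h(x)+A^Tz$, $0\in\partial g^*(z)-Ax$ have a solution $(x^\star,z^\star)\in\operatorname{dom}\phi_{\mathrm p}\times\operatorname{dom}\phi_{\mathrm d}$. Distances: $d_\pm(x,z;x',z')=\frac1\tau d_{\mathrm p}(x,x')+\frac1\sigma d_{\mathrm d}(z,z')\pm\langle z-z',A(x-x')\rangle$, $d_{\mathrm{pcv}}(x,z;x',z')=d_-(x,z;x',z')-h(x)+h(x')+\langle\nabla h(x'),x-x'\rangle$, $d_{\mathrm{dcv}}(x,z;x',z')=d_+(x,z;x',z')-h(x)+h(x')+\langle\nabla h(x'),x-x'\rangle$. *)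

From HB Require Import structures.
From mathcomp Require Import all_boot all_order all_algebra.
From mathcomp Require Import all_classical all_reals all_analysis.
Set Implicit Arguments. Unset Strict Implicit. Unset Printing Implicit Defensive.
Import Order.TTheory GRing.Theory Num.Theory.
Import numFieldNormedType.Exports.
Local Open Scope classical_set_scope.
Local Open Scope ring_scope.

Section Defs.
Variable R : realType.

Definition dot (n : nat) (u v : 'cV[R]_n) : R := \sum_(i < n) u i 0 * v i 0.

Definition edom (n : nat) (F : 'cV[R]_n -> \bar R) : set 'cV[R]_n :=
  [set x | (F x < +oo)%E].

(* convexity of an extended-real-valued function (convex epigraph) *)
Definition econvex (n : nat) (F : 'cV[R]_n -> \bar R) : Prop :=
  forall (x y : 'cV[R]_n) (a b t : R), (F x <= a%:E)%E -> (F y <= b%:E)%E ->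
    0 <= t -> t <= 1 -> (F (t *: x + (1 - t) *: y)%R <= (t * a + (1 - t) * b)%:E)%E.

Definition eclosed (n : nat) (F : 'cV[R]_n -> \bar R) : Prop :=
  forall a : R, closed [set x | (F x <= a%:E)%E].

Definition eproper (n : nat) (F : 'cV[R]_n -> \bar R) : Prop :=
  (forall x, F x != -oo%E) /\ exists x, (F x < +oo)%E.

Definition conj (m : nat) (g : 'cV[R]_m -> \bar R) (z : 'cV[R]_m) : \bar R :=
  ereal_sup [set ((dot z y)%:E - g y)%E | y in [set: 'cV[R]_m]].

Definition subgrad (n : nat) (F : 'cV[R]_n -> \bar R) (x v : 'cV[R]_n) : Prop :=
  F x \is a fin_num /\ forall y, (F x + (dot v (y - x))%:E <= F y)%E.

Definition has_grad (n : nat) (F : 'cV[R]_n -> \bar R) (x g : 'cV[R]_n) : Prop :=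
  F x \is a fin_num /\ differentiable (fine \o F) x /\
  forall u, 'd (fine \o F) x u = dot g u.

Definition is_norm (n : nat) (N : 'cV[R]_n -> R) : Prop :=
  (forall x, 0 <= N x) /\ (forall x, N x = 0 -> x = 0) /\
  (forall (a : R) x, N (a *: x) = `|a| * N x) /\
  (forall x y, N (x + y) <= N x + N y).

Definition opnorm (m n : nat) (Nd : 'cV[R]_m -> R) (Np : 'cV[R]_n -> R)
  (A : 'M[R]_(m, n)) : R :=
  sup [set r : R | exists (u : 'cV[R]_n) (v : 'cV[R]_m),
        [/\ u != 0, v != 0 & r = dot v (A *m u) / (Nd v * Np u)]].

Definition bregman_kernel (n : nat) (phi : 'cV[R]_n -> \bar R)
  (gphi : 'cV[R]_n -> 'cV[R]_n) : Prop :=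
  econvex phi /\ (interior (edom phi) !=set0) /\
  (forall x, edom phi x -> phi x \is a fin_num) /\
  {within edom phi, continuous (fine \o phi)} /\
  (forall x, interior (edom phi) x -> has_grad phi x (gphi x)) /\
  (forall x, interior (edom phi) x -> {for x, continuous gphi}).

(* Bregman distance d(x,y) (for x in dom phi, y in int dom phi) *)
Definition bdist (n : nat) (phi : 'cV[R]_n -> \bar R)
  (gphi : 'cV[R]_n -> 'cV[R]_n) (x y : 'cV[R]_n) : R :=
  fine (phi x) - fine (phi y) - dot (gphi y) (x - y).

Definition prox_obj (n : nat) (phi : 'cV[R]_n -> \bar R)
  (gphi : 'cV[R]_n -> 'cV[R]_n) (F : 'cV[R]_n -> \bar R) (y a x : 'cV[R]_n)
  : \bar R :=
  (F x + (dot a x)%:E + (bdist phi gphi x y)%:E)%E.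

(* p is a minimizer of F(x) + <a,x> + d(x,y) (objective = +oo off dom phi) *)
Definition is_argmin_prox (n : nat) (phi : 'cV[R]_n -> \bar R)
  (gphi : 'cV[R]_n -> 'cV[R]_n) (F : 'cV[R]_n -> \bar R) (y a p : 'cV[R]_n)
  : Prop :=
  edom phi p /\
  forall x, edom phi x -> (prox_obj phi gphi F y a p <= prox_obj phi gphi F y a x)%E.

Definition prox_well_defined (n : nat) (phi : 'cV[R]_n -> \bar R)
  (gphi : 'cV[R]_n -> 'cV[R]_n) (F : 'cV[R]_n -> \bar R) : Prop :=
  forall (a y : 'cV[R]_n), interior (edom phi) y ->
    exists p, [/\ is_argmin_prox phi gphi F y a p, interior (edom phi) p &
      forall q, is_argmin_prox phi gphi F y a q -> q = p].

Definition is_prox (n : nat) (phi : 'cV[R]_n -> \bar R)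
  (gphi : 'cV[R]_n -> 'cV[R]_n) (F : 'cV[R]_n -> \bar R) (y a p : 'cV[R]_n)
  : Prop := is_argmin_prox phi gphi F y a p.

Definition escale (n : nat) (c : R) (F : 'cV[R]_n -> \bar R) : 'cV[R]_n -> \bar R :=
  fun x => (c%:E * F x)%E.

Definition lagr (m n : nat) (f h : 'cV[R]_n -> \bar R) (g : 'cV[R]_m -> \bar R)
  (A : 'M[R]_(m, n)) (x : 'cV[R]_n) (z : 'cV[R]_m) : \bar R :=
  if (f x + h x)%E == +oo%E then +oo%E
  else if conj g z == +oo%E then -oo%E
  else (f x + h x + (dot z (A *m x))%:E - conj g z)%E.

(* d_+ / d_- : sgn = true gives d_+, false gives d_- *)
Definition dpm (m n : nat) (sgn : bool) (tau sigma : R)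
  (phip : 'cV[R]_n -> \bar R) (gphip : 'cV[R]_n -> 'cV[R]_n)
  (phid : 'cV[R]_m -> \bar R) (gphid : 'cV[R]_m -> 'cV[R]_m)
  (A : 'M[R]_(m, n)) (x : 'cV[R]_n) (z : 'cV[R]_m) (x' : 'cV[R]_n) (z' : 'cV[R]_m)
  : R :=
  tau^-1 * bdist phip gphip x x' + sigma^-1 * bdist phid gphid z z'
  + (if sgn then 1 else -1) * dot (z - z') (A *m (x - x')).

(* d_pcv (sgn = false) / d_dcv (sgn = true) *)
Definition dcv (m n : nat) (sgn : bool) (tau sigma : R)
  (phip : 'cV[R]_n -> \bar R) (gphip : 'cV[R]_n -> 'cV[R]_n)
  (phid : 'cV[R]_m -> \bar R) (gphid : 'cV[R]_m -> 'cV[R]_m)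
  (A : 'M[R]_(m, n)) (h : 'cV[R]_n -> \bar R) (gh : 'cV[R]_n -> 'cV[R]_n)
  (x : 'cV[R]_n) (z : 'cV[R]_m) (x' : 'cV[R]_n) (z' : 'cV[R]_m) : R :=
  dpm sgn tau sigma phip gphip phid gphid A x z x' z'
  - fine (h x) + fine (h x') + dot (gh x') (x - x').

End Defs.

From HB Require Import structures.
From mathcomp Require Import all_boot all_order all_algebra.
From mathcomp Require Import all_classical all_reals all_analysis.
From mathcomp Require Import ring lra.
Import Order.TTheory GRing.Theory Num.Theory.
Import numFieldNormedType.Exports.
Local Open Scope classical_set_scope.
Local Open Scope ring_scope.
Set Implicit Arguments. Unset Strict Implicit. Unset Printing Implicit Defensive.

(* A Bregman proximal step p = prox^phi_{cF}(y, a) satisfies the three-point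
   inequality  c F(p) + <a,p> + d(p,y) + d(x,p) <= c F(x) + <a,x> + d(x,y):
   comparing the prox objective at p and at p + t (x - p) and letting t -> 0+
   gives  0 <= c (F(x) - F(p)) + <a + grad phi(p) - grad phi(y), x - p>,
   and the Bregman three-point identity turns this into the inequality above.
   Applying it to both half-steps of either Condat-Vu iteration (F = f on the
   primal side, F = conj g on the dual side) and adding the gradient
   inequality of the convex h at x^(k) gives the estimate, once the bilinear
   coupling terms are collected into d and \tilde d. *)

Section InnerProduct.
Variable R : realType.

Lemma dotE n (u v : 'cV[R]_n) : dot u v = (u^T *m v) 0 0.
Proof. by rewrite mxE; apply: eq_bigr => i _; rewrite mxE. Qed.

Lemma dot_trmx m n (A : 'M[R]_(m, n)) (z : 'cV[R]_m) (x : 'cV[R]_n) :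
  dot (A^T *m z) x = dot z (A *m x).
Proof. by rewrite !dotE trmx_mul trmxK mulmxA. Qed.

Lemma dotC n (u v : 'cV[R]_n) : dot u v = dot v u.
Proof. by rewrite /dot; apply: eq_bigr => i _; rewrite mulrC. Qed.

Lemma dotDr n (u v w : 'cV[R]_n) : dot u (v + w) = dot u v + dot u w.
Proof. by rewrite !dotE mulmxDr mxE. Qed.

Lemma dotZr n (u v : 'cV[R]_n) a : dot u (a *: v) = a * dot u v.
Proof. by rewrite !dotE -scalemxAr mxE. Qed.

Lemma dotDl n (u v w : 'cV[R]_n) : dot (u + v) w = dot u w + dot v w.
Proof. by rewrite dotC dotDr !(dotC w). Qed.

Lemma dotZl n (u v : 'cV[R]_n) a : dot (a *: u) v = a * dot u v.
Proof. by rewrite dotC dotZr dotC. Qed.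

Lemma dotNr n (u v : 'cV[R]_n) : dot u (- v) = - dot u v.
Proof. by rewrite -scaleN1r dotZr mulN1r. Qed.

Lemma dotNl n (u v : 'cV[R]_n) : dot (- u) v = - dot u v.
Proof. by rewrite -scaleN1r dotZl mulN1r. Qed.

Lemma dotBr n (u v w : 'cV[R]_n) : dot u (v - w) = dot u v - dot u w.
Proof. by rewrite dotDr dotNr. Qed.

Lemma dotBl n (u v w : 'cV[R]_n) : dot (u - v) w = dot u w - dot v w.
Proof. by rewrite dotDl dotNl. Qed.

End InnerProduct.

Section ConvexFunctions.
Variable R : realType.

Lemma has_grad_cvg_right n (F : 'cV[R]_n -> \bar R) p v g :
  has_grad F p g ->
  (fun t : R => t^-1 * (fine (F (p + t *: v)) - fine (F p))) @ 0^'+ --> dot g v.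
Proof.
move=> [_ [dF dE]].
have := @diff_derivable _ _ _ _ _ v dF; rewrite /derivable.
rewrite -/(derive _ p v) deriveE // dE => cvF.
have cvF' : (fun t : R => t^-1 *: ((fine \o F \o shift p) (t *: v) - fine (F p)))
    @ 0^'+ --> dot g v.
  move=> U /cvF /nbhs_ballP [_ /posnumP[e] sub].
  by exists e%:num => //= t et; rewrite lt_def => /andP[t0 _]; apply: sub.
apply: cvg_trans cvF'; apply: near_eq_cvg; near=> t.
by rewrite /= [t *: v + p]addrC.
Unshelve. all: by end_near.
Qed.

Lemma cvg_right0_ge (Q : R -> R) l c : Q @ 0^'+ --> l ->
  (forall t, 0 < t -> t <= 1 -> c <= Q t) -> c <= l.
Proof.
move=> cvQ Qc; apply: (cvgr_to_ge cvQ); near=> t; apply: Qc.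
  by near: t; exact: nbhs_right_gt.
by near: t; apply: nbhs_right_le; exact: ltr01.
Unshelve. all: by end_near.
Qed.

Lemma cvg_right0_le (Q : R -> R) l c : Q @ 0^'+ --> l ->
  (forall t, 0 < t -> t <= 1 -> Q t <= c) -> l <= c.
Proof.
move=> cvQ Qc; apply: (cvgr_to_le cvQ); near=> t; apply: Qc.
  by near: t; exact: nbhs_right_gt.
by near: t; apply: nbhs_right_le; exact: ltr01.
Unshelve. all: by end_near.
Qed.

Lemma fin_num_fine_le (y : \bar R) r :
  y != -oo%E -> (y <= r%:E)%E -> y \is a fin_num /\ fine y <= r.
Proof. by case: y => [s| |] //= _; rewrite lee_fin. Qed.

Lemma escale_fin n c (F : 'cV[R]_n -> \bar R) x :
  F x \is a fin_num -> escale c F x = (c * fine (F x))%:E.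
Proof. by move=> Fx; rewrite /escale EFinM fineK. Qed.

Lemma edom_fin n (F : 'cV[R]_n -> \bar R) x :
  (forall x, F x != -oo%E) -> edom F x -> F x \is a fin_num.
Proof. by move=> FNy Fx; rewrite fin_numE FNy /= -ltey. Qed.

Lemma econvex_segment n (F : 'cV[R]_n -> \bar R) (x p : 'cV[R]_n) t :
  econvex F -> F x \is a fin_num -> F p \is a fin_num -> 0 <= t -> t <= 1 ->
  (F (p + t *: (x - p))%R <= (t * fine (F x) + (1 - t) * fine (F p))%:E)%E.
Proof.
move=> cF Fx Fp t0 t1.
have -> : p + t *: (x - p) = t *: x + (1 - t) *: p.
  by apply/matrixP => i j; rewrite !mxE; ring.
by apply: cF; rewrite ?fineK.
Qed.

Lemma econvex_grad_ineq n (F : 'cV[R]_n -> \bar R) (g x0 x : 'cV[R]_n) :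
  econvex F -> (forall y, F y != -oo%E) -> has_grad F x0 g ->
  F x \is a fin_num -> fine (F x0) + dot g (x - x0) <= fine (F x).
Proof.
move=> cF FNy gF Fx; have Fx0 := gF.1.
suff : dot g (x - x0) <= fine (F x) - fine (F x0) by lra.
apply: (cvg_right0_le (has_grad_cvg_right (v := x - x0) gF)) => t t0 t1.
have [_ Ft] := fin_num_fine_le (FNy _) (econvex_segment cF Fx Fx0 (ltW t0) t1).
rewrite mulrC ler_pdivrMr //; lra.
Qed.

End ConvexFunctions.

Section BregmanProx.
Variable R : realType.

Lemma bregman_kernel_fin n (phi : 'cV[R]_n -> \bar R) gphi x :
  bregman_kernel phi gphi -> edom phi x -> phi x \is a fin_num.
Proof. by case=> _ [_ [phi_fin _]]; apply: phi_fin. Qed.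

Lemma bregman_kernel_neqNy n (phi : 'cV[R]_n -> \bar R) gphi x :
  bregman_kernel phi gphi -> phi x != -oo%E.
Proof.
move=> bk; apply/negP => /eqP phixNy.
have : edom phi x by rewrite /edom /= phixNy.
by move/(bregman_kernel_fin bk); rewrite phixNy.
Qed.

Lemma bdist_three_point n (phi : 'cV[R]_n -> \bar R) gphi (x y p : 'cV[R]_n) :
  bdist phi gphi x y - bdist phi gphi p y - bdist phi gphi x p =
  dot (gphi p - gphi y) (x - p).
Proof. rewrite /bdist !(dotBl, dotBr); lra. Qed.

Section ThreePoint.
Variables (n : nat) (phi : 'cV[R]_n -> \bar R) (gphi : 'cV[R]_n -> 'cV[R]_n).
Variables (F : 'cV[R]_n -> \bar R) (c : R) (y a p : 'cV[R]_n).
Hypotheses (bk : bregman_kernel phi gphi) (cF : econvex F).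
Hypotheses (FNy : forall x, F x != -oo%E) (c_gt0 : 0 < c).
Hypothesis (p_int : interior (edom phi) p).
Hypothesis (p_min : is_argmin_prox phi gphi (escale c F) y a p).

Lemma prox_fin x : edom phi x -> edom F x -> F p \is a fin_num.
Proof.
move=> phix /(edom_fin FNy) Fx; have := p_min.2 x phix.
rewrite /prox_obj (escale_fin _ Fx) -!EFinD /escale.
case: (F p) (FNy p) => [r| |] //= _.
by rewrite mulry gtr0_sg // mul1e.
Qed.

Lemma prox_variational_ineq x : edom phi x -> edom F x ->
  0 <= c * (fine (F x) - fine (F p)) + dot a (x - p) + dot (gphi p - gphi y) (x - p).
Proof.
move=> phix Fdx; have Fx := edom_fin FNy Fdx; have Fp := prox_fin phix Fdx.
have phip_fin := bregman_kernel_fin bk (interior_subset p_int).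
have phix_fin := bregman_kernel_fin bk phix.
have gp : has_grad phi p (gphi p) by apply: bk.2.2.2.2.1.
rewrite dotBl; set K := c * _ + _.
suff : - (K - dot (gphi y) (x - p)) <= dot (gphi p) (x - p) by lra.
apply: (cvg_right0_ge (has_grad_cvg_right (v := x - p) gp)) => t t0 t1.
have [phit_fin phit] := fin_num_fine_le (bregman_kernel_neqNy _ bk)
  (econvex_segment bk.1 phix_fin phip_fin (ltW t0) t1).
have phit_dom : edom phi (p + t *: (x - p)) by rewrite /edom /= -(fineK phit_fin) ltry.
have [Ft_fin Ft] := fin_num_fine_le (FNy _) (econvex_segment cF Fx Fp (ltW t0) t1).
have := p_min.2 _ phit_dom.
rewrite /prox_obj !escale_fin // -!EFinD lee_fin /bdist /K.
rewrite !(dotDr, dotZr, dotBr) => min_t.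
have cFt : c * fine (F (p + t *: (x - p))) <= c * (t * fine (F x) + (1 - t) * fine (F p)).
  by rewrite ler_pM2l.
rewrite [t^-1 * _]mulrC ler_pdivlMr //; nra.
Qed.

Lemma prox_three_point x : edom phi x -> edom F x ->
  c * fine (F p) + dot a p + bdist phi gphi p y + bdist phi gphi x p <=
  c * fine (F x) + dot a x + bdist phi gphi x y.
Proof.
move=> phix Fx; have := prox_variational_ineq phix Fx.
have := @bdist_three_point n phi gphi x y p; rewrite !dotBr; lra.
Qed.

End ThreePoint.

Lemma prox_three_point_scaled n (phi : 'cV[R]_n -> \bar R) gphi F c y b p x :
  bregman_kernel phi gphi -> econvex F -> (forall x, F x != -oo%E) -> 0 < c ->
  interior (edom phi) p -> is_argmin_prox phi gphi (escale c F) y (c *: b) p ->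
  edom phi x -> edom F x ->
  fine (F p) + dot b p + c^-1 * (bdist phi gphi p y + bdist phi gphi x p) <=
  fine (F x) + dot b x + c^-1 * bdist phi gphi x y.
Proof.
move=> bk cF FNy c_gt0 p_int p_min phix Fx.
have := prox_three_point bk cF FNy c_gt0 p_int p_min phix Fx.
move: (bdist _ _ p y) (bdist _ _ x p) (bdist _ _ x y) => Dpy Dxp Dxy.
rewrite !dotZl => ineq.
by rewrite -(ler_pM2l c_gt0) !mulrDr !mulrA mulfV ?gt_eqF // !mul1r; lra.
Qed.

Lemma prox_iterates_interior n (phi : 'cV[R]_n -> \bar R) gphi F
    (a xk : nat -> 'cV[R]_n) :
  prox_well_defined phi gphi F -> interior (edom phi) (xk 0%N) ->
  (forall k, is_prox phi gphi F (xk k) (a k) (xk k.+1)) ->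
  forall k, interior (edom phi) (xk k).
Proof.
move=> wd x0_int step; elim=> // k xk_int.
have [p [_ p_int p_uniq]] := wd (a k) _ xk_int.
by rewrite (p_uniq _ (step k)).
Qed.

End BregmanProx.

Section Conjugate.
Variable R : realType.

Lemma le_conj m (g : 'cV[R]_m -> \bar R) z y : ((dot z y)%:E - g y <= conj g z)%E.
Proof. by apply: ereal_sup_ubound; exists y. Qed.

Lemma conj_neqNy m (g : 'cV[R]_m -> \bar R) z : eproper g -> conj g z != -oo%E.
Proof.
move=> [gNy [y gy]]; have gy_fin : g y \is a fin_num by rewrite fin_numE gNy -ltey.
apply/negP => /eqP conjNy; have := le_conj g z y.
by rewrite conjNy -(fineK gy_fin) -EFinB.
Qed.

Lemma econvex_conj m (g : 'cV[R]_m -> \bar R) : eproper g -> econvex (conj g).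
Proof.
move=> [gNy _] z1 z2 a b t z1a z2b t0 t1.
apply: ge_ereal_sup => _ [y _ <-].
have := le_conj g z1 y; have := le_conj g z2 y.
case: (g y) (gNy y) => [r| |] // _; last by move=> _ _; rewrite addeNy leNye.
move=> /le_trans /(_ z2b); rewrite -EFinB lee_fin => le2.
move=> /le_trans /(_ z1a); rewrite -EFinB lee_fin => le1.
rewrite -EFinB lee_fin dotDl !dotZl.
have : t * (dot z1 y - r) <= t * a by rewrite ler_wpM2l.
have : (1 - t) * (dot z2 y - r) <= (1 - t) * b by rewrite ler_wpM2l // subr_ge0.
lra.
Qed.

End Conjugate.

Section CondatVu.
Variable R : realType.

Lemma lagr_finE m n (f h : 'cV[R]_n -> \bar R) (g : 'cV[R]_m -> \bar R) A x z :
  f x \is a fin_num -> h x \is a fin_num -> conj g z \is a fin_num ->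
  lagr f h g A x z = (fine (f x) + fine (h x) + dot z (A *m x) - fine (conj g z))%:E.
Proof.
by move=> fx hx gz; rewrite /lagr -(fineK fx) -(fineK hx) -(fineK gz) /= !EFinD.
Qed.

Section CondatVuStep.
Variables (m n : nat) (f h : 'cV[R]_n -> \bar R) (gh : 'cV[R]_n -> 'cV[R]_n).
Variables (g : 'cV[R]_m -> \bar R) (A : 'M[R]_(m, n)).
Variables (phip : 'cV[R]_n -> \bar R) (gphip : 'cV[R]_n -> 'cV[R]_n).
Variables (phid : 'cV[R]_m -> \bar R) (gphid : 'cV[R]_m -> 'cV[R]_m).
Variables (sigma tau : R).
Hypotheses (fNy : forall x, f x != -oo%E) (hNy : forall x, h x != -oo%E).
Hypotheses (cf : econvex f) (ch : econvex h).
Hypothesis (h_grad : forall x, edom h x -> has_grad h x (gh x)).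
Hypothesis (gp : eproper g).
Hypotheses (bkp : bregman_kernel phip gphip) (bkd : bregman_kernel phid gphid).
Hypothesis (phip_h : edom phip `<=` edom h).
Hypotheses (sigma_gt0 : 0 < sigma) (tau_gt0 : 0 < tau).

Local Notation Dp := (bdist phip gphip).
Local Notation Dd := (bdist phid gphid).
Local Notation L := (lagr f h g A).

(* [xbar] and [zbar] are the extrapolated points: [(2 x1 - x0, z0)] in the
   primal iteration, [(x0, 2 z1 - z0)] in the dual one. *)
Lemma condat_vu_step_estimate x0 x1 xbar x z0 z1 zbar z :
  interior (edom phip) x0 -> interior (edom phip) x1 -> interior (edom phid) z1 ->
  is_prox phip gphip (escale tau f) x0 (tau *: (A^T *m zbar) + tau *: gh x0) x1 ->
  is_prox phid gphid (escale sigma (conj g)) z0 (- (sigma *: (A *m xbar))) z1 ->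
  edom f x -> edom phip x -> edom (conj g) z -> edom phid z ->
  (L x1 z - L x z1 <=
   (tau^-1 * (Dp x x0 - Dp x x1 - Dp x1 x0) + sigma^-1 * (Dd z z0 - Dd z z1 - Dd z1 z0)
    + (fine (h x1) - fine (h x0) - dot (gh x0) (x1 - x0))
    - dot zbar (A *m (x1 - x)) + dot z (A *m x1) - dot z1 (A *m x)
    - dot (z - z1) (A *m xbar))%:E)%E.
Proof.
move=> x0_int x1_int z1_int x1_prox z1_prox fx phix gz phiz.
rewrite -scalerDr in x1_prox; rewrite -scalerN in z1_prox.
have cg := econvex_conj gp; have gNy z' := conj_neqNy z' gp.
have fx1 := prox_fin fNy tau_gt0 x1_prox phix fx.
have gz1 := prox_fin gNy sigma_gt0 z1_prox phiz gz.
have x_step := prox_three_point_scaled bkp cf fNy tau_gt0 x1_int x1_prox phix fx.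
have z_step := prox_three_point_scaled bkd cg gNy sigma_gt0 z1_int z1_prox phiz gz.
have h_fin x' : edom phip x' -> h x' \is a fin_num.
  by move=> /phip_h; exact: edom_fin.
have hx0 : edom h x0 := phip_h (interior_subset x0_int).
have hx := h_fin _ phix; have hx1 := h_fin _ (interior_subset x1_int).
have h_grad_ineq := econvex_grad_ineq ch hNy (h_grad hx0) hx.
rewrite !lagr_finE ?(edom_fin fNy fx) ?(edom_fin gNy gz) //.
rewrite -EFinB lee_fin.
move: x_step z_step h_grad_ineq.
rewrite !(dotDl, dotNl, dotBr, dotDr, dotNr, dot_trmx, mulmxBr).
rewrite [dot (A *m xbar) z1]dotC [dot (A *m xbar) z]dotC; lra.
Qed.

Lemma primal_condat_vu_step x0 x1 x z0 z1 z :
  interior (edom phip) x0 -> interior (edom phip) x1 -> interior (edom phid) z1 ->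
  is_prox phip gphip (escale tau f) x0 (tau *: (A^T *m z0) + tau *: gh x0) x1 ->
  is_prox phid gphid (escale sigma (conj g)) z0
    (- (sigma *: (A *m (2%:R *: x1 - x0)))) z1 ->
  edom f x -> edom phip x -> edom (conj g) z -> edom phid z ->
  (L x1 z - L x z1 <=
   (dpm false tau sigma phip gphip phid gphid A x z x0 z0
    - dpm false tau sigma phip gphip phid gphid A x z x1 z1
    - dcv false tau sigma phip gphip phid gphid A h gh x1 z1 x0 z0)%:E)%E.
Proof.
move=> x0_int x1_int z1_int x1_prox z1_prox fx phix gz phiz.
apply: le_trans (condat_vu_step_estimate x0_int x1_int z1_int x1_prox z1_prox
  fx phix gz phiz) _.
rewrite lee_fin /dcv /dpm !mulmxBr -scalemxAr.
rewrite !(dotZr, dotDl, dotNl, dotBr, dotDr, dotBl); lra.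
Qed.

Lemma dual_condat_vu_step x0 x1 x z0 z1 z :
  interior (edom phip) x0 -> interior (edom phip) x1 -> interior (edom phid) z1 ->
  is_prox phid gphid (escale sigma (conj g)) z0 (- (sigma *: (A *m x0))) z1 ->
  is_prox phip gphip (escale tau f) x0
    (tau *: (A^T *m (2%:R *: z1 - z0)) + tau *: gh x0) x1 ->
  edom f x -> edom phip x -> edom (conj g) z -> edom phid z ->
  (L x1 z - L x z1 <=
   (dpm true tau sigma phip gphip phid gphid A x z x0 z0
    - dpm true tau sigma phip gphip phid gphid A x z x1 z1
    - dcv true tau sigma phip gphip phid gphid A h gh x1 z1 x0 z0)%:E)%E.
Proof.
move=> x0_int x1_int z1_int z1_prox x1_prox fx phix gz phiz.
apply: le_trans (condat_vu_step_estimate x0_int x1_int z1_int x1_prox z1_prox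
  fx phix gz phiz) _.
rewrite lee_fin /dcv /dpm !mulmxBr.
rewrite !(dotZl, dotDl, dotNl, dotBr, dotDr, dotBl); lra.
Qed.

End CondatVuStep.
End CondatVu.

Theorem mainTheorem3 (R : realType) (m n : nat)
  (f h : 'cV[R]_n -> \bar R) (gh : 'cV[R]_n -> 'cV[R]_n)
  (g : 'cV[R]_m -> \bar R) (A : 'M[R]_(m, n))
  (phip : 'cV[R]_n -> \bar R) (gphip : 'cV[R]_n -> 'cV[R]_n)
  (phid : 'cV[R]_m -> \bar R) (gphid : 'cV[R]_m -> 'cV[R]_m)
  (Np : 'cV[R]_n -> R) (Nd : 'cV[R]_m -> R) (L sigma tau : R) :
  (* f, g, h closed convex; h differentiable on its open domain *)
  econvex f -> eclosed f -> econvex g -> eclosed g -> econvex h -> eclosed h ->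
  open (edom h) -> (forall x, edom h x -> has_grad h x (gh x)) ->
  (* f + h and g proper *)
  eproper (fun x => (f x + h x)%E) -> eproper g ->
  (* Bregman kernels and well-definedness of the proximal maps *)
  bregman_kernel phip gphip -> bregman_kernel phid gphid ->
  prox_well_defined phip gphip (escale tau f) ->
  prox_well_defined phid gphid (escale sigma (conj g)) ->
  (* strong convexity of the kernels w.r.t. norms *)
  is_norm Np -> is_norm Nd ->
  (forall x x', edom phip x -> interior (edom phip) x' ->
     2^-1 * Np (x - x') ^+ 2 <= bdist phip gphip x x') ->
  (forall z z', edom phid z -> interior (edom phid) z' ->
     2^-1 * Nd (z - z') ^+ 2 <= bdist phid gphid z z') ->
  (* relative smoothness of h *)
  edom phip `<=` edom h -> 0 < L ->
  (forall x x', edom phip x -> interior (edom phip) x' ->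
     fine (h x) - fine (h x') - dot (gh x') (x - x') <= L * bdist phip gphip x x') ->
  (* existence of a solution of the optimality conditions *)
  (exists (xs : 'cV[R]_n) (zs : 'cV[R]_m), [/\ edom phip xs, edom phid zs,
     (exists v, subgrad f xs v /\ v + gh xs + A^T *m zs = 0) &
     (exists w, subgrad (conj g) zs w /\ w - A *m xs = 0)]) ->
  (* step sizes *)
  0 < sigma -> 0 < tau ->
  sigma * tau * opnorm Nd Np A ^+ 2 + tau * L <= 1 ->
  (* Bregman primal Condat--Vu *)
  (forall (xk : nat -> 'cV[R]_n) (zk : nat -> 'cV[R]_m),
     interior (edom phip) (xk 0%N) -> edom h (xk 0%N) ->
     interior (edom phid) (zk 0%N) ->
     (forall k, is_prox phip gphip (escale tau f) (xk k)
                  (tau *: (A^T *m zk k) + tau *: gh (xk k)) (xk k.+1) /\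
                is_prox phid gphid (escale sigma (conj g)) (zk k)
                  (- (sigma *: (A *m (2%:R *: xk k.+1 - xk k)))) (zk k.+1)) ->
     forall k (x : 'cV[R]_n) (z : 'cV[R]_m),
       edom f x -> edom phip x -> edom (conj g) z -> edom phid z ->
       (lagr f h g A (xk k.+1) z - lagr f h g A x (zk k.+1) <=
        (dpm false tau sigma phip gphip phid gphid A x z (xk k) (zk k)
         - dpm false tau sigma phip gphip phid gphid A x z (xk k.+1) (zk k.+1)
         - dcv false tau sigma phip gphip phid gphid A h gh
             (xk k.+1) (zk k.+1) (xk k) (zk k))%:E)%E) /\
  (* Bregman dual Condat--Vu *)
  (forall (xk : nat -> 'cV[R]_n) (zk : nat -> 'cV[R]_m),
     interior (edom phip) (xk 0%N) -> edom h (xk 0%N) ->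
     interior (edom phid) (zk 0%N) ->
     (forall k, is_prox phid gphid (escale sigma (conj g)) (zk k)
                  (- (sigma *: (A *m xk k))) (zk k.+1) /\
                is_prox phip gphip (escale tau f) (xk k)
                  (tau *: (A^T *m (2%:R *: zk k.+1 - zk k)) + tau *: gh (xk k))
                  (xk k.+1)) ->
     forall k (x : 'cV[R]_n) (z : 'cV[R]_m),
       edom f x -> edom phip x -> edom (conj g) z -> edom phid z ->
       (lagr f h g A (xk k.+1) z - lagr f h g A x (zk k.+1) <=
        (dpm true tau sigma phip gphip phid gphid A x z (xk k) (zk k)
         - dpm true tau sigma phip gphip phid gphid A x z (xk k.+1) (zk k.+1)
         - dcv true tau sigma phip gphip phid gphid A h gh
             (xk k.+1) (zk k.+1) (xk k) (zk k))%:E)%E).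
Proof.
move=> cf _ _ _ ch _ _ h_grad [fhNy _] gp bkp bkd wdp wdd _ _ _ _ phip_h _ _ _
  sigma_gt0 tau_gt0 _.
have [fNy hNy] : (forall x, f x != -oo%E) /\ (forall x, h x != -oo%E).
  by split=> x; move: (fhNy x); rewrite adde_eq_ninfty negb_or => /andP[].
split=> xk zk x0_int _ z0_int iter k x z fx phix gz phiz.
- have xk_int := prox_iterates_interior wdp x0_int (fun k => (iter k).1).
  have zk_int := prox_iterates_interior wdd z0_int (fun k => (iter k).2).
  have [x_prox z_prox] := iter k.
  exact: (primal_condat_vu_step fNy hNy cf ch h_grad gp bkp bkd phip_h
    sigma_gt0 tau_gt0 (xk_int k) (xk_int k.+1) (zk_int k.+1) x_prox z_prox).
- have xk_int := prox_iterates_interior wdp x0_int (fun k => (iter k).2).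
  have zk_int := prox_iterates_interior wdd z0_int (fun k => (iter k).1).
  have [z_prox x_prox] := iter k.
  exact: (dual_condat_vu_step fNy hNy cf ch h_grad gp bkp bkd phip_h
    sigma_gt0 tau_gt0 (xk_int k) (xk_int k.+1) (zk_int k.+1) z_prox x_prox).
Qed.
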